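(* Let $R$ be a finite commutative chain ring with maximal ideal $\langle a\rangle$, $a$ of nilpotency index $t$, residue field $\mathbb F_q$; let $t_i(X_i)$, $I$, $A$ be as in the context. Let $\mathcal K\neq0$ be a Hensel lift of a multivariable semisimple code in $A$, and let $\overline{\mathcal K}$ be its image in $\mathbb F_q[X_1,\dots,X_r]/\langle\bar t_1(X_1),\dots,\bar t_r(X_r)\rangle$ under reduction modulo $\langle a\rangle$. Then $d(\mathcal K)=d(\overline{\mathcal K})$.
   Context: Bars denote reduction mod $\langle a\rangle$, coefficientwise on polynomials. For $i=1,\dots,r$, $t_i(X_i)\in R[X_i]$ is monic with $\bar t_i$ square-free; $I=\langle t_1(X_1),\dots,t_r(X_r)\rangle$, $A=R[X_1,\dots,X_r]/I$. A semisimple code is an ideal of $A$. Elements of $A$ (resp. of the reduced algebra over $\mathbb F_q$) are identified with coefficient vectors with respect to the monomial basis $X_1^{i_1}\cdots X_r^{i_r}$, $0\le i_k<\deg t_k$; $d(\cdot)$ is the minimum Hamming weight (number of nonzero coordinates) of the nonzero elements of a code. An admissible family for a code $\mathcal K$ is a family $G_0,\dots,G_t\in R[X_1,\dots,X_r]$ with $\bigcap_{i=0}^t\mathrm{Ann}_A\langle G_i+I\rangle=0$, $\mathrm{Ann}_A\langle G_i+I\rangle+\mathrm{Ann}_A\langle G_j+I\rangle=A$ for $i\ne j$, and $\mathcal K=\langle G_1,aG_2,\dots,a^{t-1}G_t\rangle+I$. $\mathcal K$ is a Hensel lift of a multivariable semisimple code if it has an admissible family with $\langle G_1+I\rangle\neq0$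 and $\langle G_i+I\rangle=0$ for all $i=2,\dots,t$. *)

From HB Require Import structures.
From mathcomp Require Import all_boot all_order all_algebra.
From mathcomp Require Import mpoly.
Set Implicit Arguments. Unset Strict Implicit. Unset Printing Implicit Defensive.
Import GRing.Theory.
Local Open Scope ring_scope.

Definition is_ideal (R : finComNzRingType) (S : {set R}) : Prop :=
  [/\ (0 : R) \in S,
      forall x y, x \in S -> y \in S -> x + y \in S &
      forall r x, x \in S -> r * x \in S].

Definition princ_ideal (R : finComNzRingType) (a : R) : {set R} :=
  [set x | [exists y, x == a * y]].

Definition chain_ring (R : finComNzRingType) : Prop :=
  forall S T : {set R}, is_ideal S -> is_ideal T -> S \subset T \/ T \subset S.

Definition maximal_ideal (R : finComNzRingType) (M : {set R}) : Prop :=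
  [/\ is_ideal M, M != [set: R] &
      forall S : {set R}, is_ideal S -> M \subset S -> S = M \/ S = [set: R]].

Definition squarefree (F : fieldType) (p : {poly F}) : Prop :=
  forall d : {poly F}, (d * d %| p)%R -> (size d <= 1)%N.

Definition polyInVar (S : nzRingType) (r : nat) (i : 'I_r) (p : {poly S})
  : {mpoly S[r]} :=
  \sum_(k < size p) mpolyC r p`_k * 'X_i ^+ k.

Definition inI (S : comNzRingType) (r : nat) (T : 'I_r -> {poly S})
  (f : {mpoly S[r]}) : Prop :=
  exists h : 'I_r -> {mpoly S[r]}, f = \sum_(i < r) h i * polyInVar i (T i).

(* a polynomial is reduced if it is a linear combination of the monomial basis
   X_1^{i_1}...X_r^{i_r}, 0 <= i_k < deg t_k; reduced polynomials are the
   canonical representatives of elements of S[X]/I (t_k monic) *)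
Definition reduced (S : nzRingType) (r : nat) (T : 'I_r -> {poly S})
  (f : {mpoly S[r]}) : Prop :=
  forall m, m \in msupp f -> forall k : 'I_r, (m k < (size (T k)).-1)%N.

Definition hweight (S : nzRingType) (r : nat) (f : {mpoly S[r]}) : nat :=
  size (msupp f).

(* d is the minimum distance of the code C (an ideal of S[X] containing I,
   i.e. an ideal of S[X]/I): each element of S[X]/I is represented by its
   unique reduced representative, which lies in C iff the class lies in C/I *)
Definition is_min_dist (S : nzRingType) (r : nat) (T : 'I_r -> {poly S})
  (C : {mpoly S[r]} -> Prop) (d : nat) : Prop :=
  (exists f, [/\ C f, reduced T f, f != 0 & hweight f = d]) /\
  (forall f, C f -> reduced T f -> f != 0 -> (d <= hweight f)%N).

(* K = <G_1, a G_2, ..., a^{t-1} G_t> + I   (as an ideal of R[X] containing I) *)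
Definition codeK (R : comNzRingType) (r : nat) (T : 'I_r -> {poly R})
  (a : R) (t : nat) (G : nat -> {mpoly R[r]}) (f : {mpoly R[r]}) : Prop :=
  exists (c : 'I_t -> {mpoly R[r]}) (h : {mpoly R[r]}),
    f = \sum_(k < t) c k * (a ^+ k *: G k.+1) + h /\ inI T h.

(* Ann_A <G_i + I> as an ideal of R[X] containing I *)
Definition annI (R : comNzRingType) (r : nat) (T : 'I_r -> {poly R})
  (g : {mpoly R[r]}) (f : {mpoly R[r]}) : Prop := inI T (f * g).

Definition admissible (R : comNzRingType) (r : nat) (T : 'I_r -> {poly R})
  (t : nat) (G : nat -> {mpoly R[r]}) : Prop :=
  (forall f, (forall i, (i <= t)%N -> annI T (G i) f) -> inI T f) /\
  (forall i j, (i <= t)%N -> (j <= t)%N -> i <> j ->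
     exists u v, [/\ annI T (G i) u, annI T (G j) v & inI T (u + v - 1)]).

Definition hensel_family (R : comNzRingType) (r : nat) (T : 'I_r -> {poly R})
  (t : nat) (G : nat -> {mpoly R[r]}) : Prop :=
  ~ inI T (G 1%N) /\ (forall i, (2 <= i <= t)%N -> inI T (G i)).

(* image of the code K under reduction mod <a>, as an ideal of F[X] containing
   Ibar = <tbar_1(X_1), ..., tbar_r(X_r)> *)
Definition codeImage (R : comNzRingType) (F : fieldType) (pi : {rmorphism R -> F})
  (r : nat) (T : 'I_r -> {poly R}) (K : {mpoly R[r]} -> Prop)
  (g : {mpoly F[r]}) : Prop :=
  exists f h, [/\ K f, inI (fun i => map_poly pi (T i)) h &
                  g = map_mpoly pi f + h].

(* Put [s = a^(t-1)].  In the chain ring [R], [s x = 0] exactly when [x] lies in [<a>],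
   so [g |-> s g] matches polynomials modulo [a] with their multiples by [s], keeping
   supports.  Under this matching the image code [Kbar] corresponds to the words of [K]
   divisible by [s]: if [s g] is in [K] then [gbar] is in [Kbar], because [1 = z G1 + v]
   in [A] with [v G1 = 0] ([A] is finite and the admissible family separates [G0] from
   [G1]); conversely [s g] is in [K] for every lift [g] of a word of [Kbar].  Hence every
   weight of [Kbar] is a weight of [K], while a nonzero [f] in [K] has a last nonzero
   multiple [a^k f = s g], whose reduction [gbar] is a nonzero word of [Kbar] supported
   inside the support of [f]. *)

From HB Require Import structures.
From mathcomp Require Import all_boot all_order all_algebra.
From mathcomp Require Import mpoly bigenough ssrcomplements ring.
From Stdlib Require Import Classical Wf_nat.
Import GRing.Theory BigEnough.
Local Open Scope ring_scope.
Set Implicit Arguments. Unset Strict Implicit. Unset Printing Implicit Defensive.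

Section IdealI.
Variables (R : comNzRingType) (n : nat) (T : 'I_n -> {poly R}).
Implicit Types (f g : {mpoly R[n]}).

Lemma inI0 : inI T 0.
Proof. by exists (fun=> 0); rewrite big1 // => i _; rewrite mul0r. Qed.

Lemma inID f g : inI T f -> inI T g -> inI T (f + g).
Proof.
move=> [hf ->] [hg ->]; exists (fun i => hf i + hg i).
by rewrite -big_split; apply: eq_bigr => i _; rewrite mulrDl.
Qed.

Lemma inIMl g f : inI T f -> inI T (g * f).
Proof.
move=> [h ->]; exists (fun i => g * h i).
by rewrite mulr_sumr; apply: eq_bigr => i _; rewrite mulrA.
Qed.

Lemma inIMr g f : inI T f -> inI T (f * g).
Proof. by rewrite mulrC; apply: inIMl. Qed.

Lemma inIN f : inI T f -> inI T (- f).
Proof. by rewrite -mulN1r; apply: inIMl. Qed.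

Lemma inIB f g : inI T f -> inI T g -> inI T (f - g).
Proof. by move=> If /inIN; apply: inID. Qed.

Lemma inIZ c f : inI T f -> inI T (c *: f).
Proof. by rewrite -mul_mpolyC; apply: inIMl. Qed.

Lemma inI_sum (I : Type) (s : seq I) (P : pred I) (F : I -> {mpoly R[n]}) :
  (forall j, P j -> inI T (F j)) -> inI T (\sum_(j <- s | P j) F j).
Proof.
move=> IF; elim/big_rec: _ => [|j f Pj If]; first exact: inI0.
by apply: inID => //; apply: IF.
Qed.

Lemma inI_polyInVar g i : inI T (g * polyInVar i (T i)).
Proof.
exists (fun j => if j == i then g else 0).
by rewrite (bigD1 i) //= eqxx big1 ?addr0 // => j /negbTE ->; rewrite mul0r.
Qed.

End IdealI.

Section PolyInVar.
Variables (R : comNzRingType) (n : nat) (i : 'I_n).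
Implicit Types (p q : {poly R}).

Lemma polyInVar_horner p : polyInVar i p = (map_poly (@mpolyC n R) p).['X_i].
Proof.
rewrite horner_coef size_map_inj_poly //; last exact: (can_inj (@mpolyCK _ _)).
by apply: eq_bigr => k _; rewrite coef_map.
Qed.

Lemma polyInVarD p q : polyInVar i (p + q) = polyInVar i p + polyInVar i q.
Proof. by rewrite !polyInVar_horner rmorphD hornerD. Qed.

Lemma polyInVarZ c p : polyInVar i (c *: p) = c *: polyInVar i p.
Proof. by rewrite !polyInVar_horner map_polyZ hornerZ mul_mpolyC. Qed.

Lemma polyInVarXn k : polyInVar i ('X^k : {poly R}) = 'X_i ^+ k.
Proof. by rewrite polyInVar_horner map_polyXn hornerXn. Qed.

Lemma polyInVar_sum (I : Type) (s : seq I) (P : pred I) (F : I -> {poly R}) :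
  polyInVar i (\sum_(j <- s | P j) F j) = \sum_(j <- s | P j) polyInVar i (F j).
Proof.
elim/big_rec2: _ => [|j p q Pj <-]; last by rewrite polyInVarD.
by rewrite polyInVar_horner rmorph0 horner0.
Qed.

End PolyInVar.

Lemma reduced_subset (S S' : nzRingType) n (T : 'I_n -> {poly S})
    (T' : 'I_n -> {poly S'}) (f : {mpoly S[n]}) (g : {mpoly S'[n]}) :
  (forall k, size (T' k) = size (T k)) -> {subset msupp g <= msupp f} ->
  reduced T f -> reduced T' g.
Proof. by move=> eqT sub_gf Tf m /sub_gf/Tf lt_m k; rewrite eqT. Qed.

Section Reduction.
Variables (R : comNzRingType) (n : nat) (T : 'I_n -> {poly R}).
Hypothesis monicT : forall i, T i \is monic.
Implicit Types (f g h : {mpoly R[n]}) (m : 'X_{1..n}).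

Lemma reduced0 : reduced T 0.
Proof. by move=> m; rewrite msupp0. Qed.

Lemma reducedD f g : reduced T f -> reduced T g -> reduced T (f + g).
Proof. by move=> Tf Tg m /msuppD_le; rewrite mem_cat => /orP[/Tf | /Tg]. Qed.

Lemma reducedZ c f : reduced T f -> reduced T (c *: f).
Proof. exact/reduced_subset/msuppZ_le. Qed.

Definition reducible f := exists g, reduced T g /\ inI T (f - g).

Lemma reducibleD f g : reducible f -> reducible g -> reducible (f + g).
Proof.
move=> [f' [Tf' If]] [g' [Tg' Ig]]; exists (f' + g'); split; first exact: reducedD.
by rewrite opprD addrACA; apply: inID.
Qed.

Lemma reducibleZ c f : reducible f -> reducible (c *: f).
Proof.
move=> [f' [Tf' If]]; exists (c *: f'); split; first exact: reducedZ.
by rewrite -scalerBr; apply: inIZ.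
Qed.

Lemma reducibleI f h : reducible f -> inI T h -> reducible (f + h).
Proof. by move=> [f' [Tf' If]] Ih; exists f'; split; rewrite // addrAC; apply: inID. Qed.

Lemma reducible_sum (I : Type) (s : seq I) (F : I -> {mpoly R[n]}) :
  (forall j, reducible (F j)) -> reducible (\sum_(j <- s) F j).
Proof.
move=> RF; elim/big_rec: _ => [|j f _ Rf]; last exact: reducibleD.
by exists 0; split; [apply: reduced0 | rewrite subrr; apply: inI0].
Qed.

Lemma polyInVar_monic i : polyInVar i (T i) =
  'X_i ^+ (size (T i)).-1 + \sum_(j < (size (T i)).-1) (T i)`_j *: 'X_i ^+ j.
Proof.
have sizeT : size (T i) = (size (T i)).-1.+1.
  by rewrite prednK // size_poly_gt0 monic_neq0.
rewrite /polyInVar [in LHS]sizeT big_ord_recr /= addrC.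
have /monicP lcT := monicT i; rewrite /lead_coef in lcT.
rewrite lcT mpolyC1 mul1r; congr (_ + _).
by apply: eq_bigr => j _; rewrite mul_mpolyC.
Qed.

(* Induction on [mdeg m]: if [m k >= deg T k], then modulo [I] the factor [X_k ^ deg T k]
   of ['X_[m]] can be traded for the lower terms of [- T k (X_k)]. *)
Lemma reducibleX m : reducible 'X_[m].
Proof.
elim: (mdeg m).+1 {-2}m (ltnSn (mdeg m)) => // N IH {}m le_mN.
have [small | /forallPn[k]] := boolP [forall k, m k < (size (T k)).-1]%N.
  exists 'X_[m]; split; last by rewrite subrr; apply: inI0.
  by move=> m'; rewrite msuppX mem_seq1 => /eqP -> k; apply: (forallP small).
rewrite -leqNgt; set d := (size (T k)).-1 => le_dm.
set m0 := (m - U_(k) *+ d)%MM.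
have em : m = (m0 + U_(k) *+ d)%MM.
  apply/mnmP => j; rewrite mnmDE mnmBE mulmnE mnm1E.
  by case: eqP => [<-|_]; rewrite ?mul1n ?subnK // mul0n subn0 addn0.
have eX : 'X_[m] = - \sum_(j < d) (T k)`_j *: 'X_[(m0 + U_(k) *+ j)%MM]
                   + 'X_[m0] * polyInVar k (T k).
  have -> : \sum_(j < d) (T k)`_j *: 'X_[(m0 + U_(k) *+ j)%MM] =
            'X_[m0] * \sum_(j < d) (T k)`_j *: 'X_k ^+ j.
    by rewrite mulr_sumr; apply: eq_bigr => j _; rewrite -scalerAr mpolyXn -mpolyXD.
  by rewrite polyInVar_monic -/d [in LHS]em mpolyXD -mpolyXn mulrDr addrCA addNr addr0.
rewrite eX; apply: reducibleI; last exact: inI_polyInVar.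
rewrite -scaleN1r; apply/reducibleZ/reducible_sum => j; apply/reducibleZ/IH.
move: le_mN; rewrite em !mdegD !mdegMn mdeg1 !mul1n ltnS => /(leq_trans _); apply.
by rewrite -addnS leq_add2l.
Qed.

Lemma reducible_all f : reducible f.
Proof.
elim/mpolyind: f => [|c m f _ _ Rf].
  by exists 0; split; [apply: reduced0 | rewrite subrr; apply: inI0].
by apply: reducibleD => //; apply/reducibleZ/reducibleX.
Qed.

End Reduction.

Section ReductionMap.
Variables (R : comNzRingType) (n : nat) (T : 'I_n -> {poly R}).
Hypothesis monicT : forall i, T i \is monic.
Implicit Types (f g h : {mpoly R[n]}) (m : 'X_{1..n}).

Definition redm m : {mpoly R[n]} :=
  \prod_(i < n) polyInVar i (Pdiv.Ring.rmodp 'X^(m i) (T i)).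

Definition red f := \sum_(m <- msupp f) f@_m *: redm m.

Lemma redwE f k : (msize f <= k)%N ->
  red f = \sum_(m : 'X_{1..n < k}) f@_m *: redm m.
Proof.
move=> le_fk; rewrite /red (big_mksub 'X_{1..n < k}) /=; first last.
- by move=> m /msize_mdeg_lt/leq_trans/(_ le_fk).
- exact: msupp_uniq.
by rewrite big_rmcond //= => m /memN_msupp_eq0 ->; rewrite scale0r.
Qed.

Lemma red_is_linear : linear red.
Proof.
move=> c f g; pose_big_enough k; first rewrite !(redwE (k := k)) //.
  rewrite scaler_sumr -big_split /=; apply/eq_bigr=> m _.
  by rewrite !scalerA -scalerDl mcoeffD mcoeffZ.
by close.
Qed.

HB.instance Definition _ := GRing.isLinear.Build R {mpoly R[n]} {mpoly R[n]}
  _ red red_is_linear.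

Lemma redX m : red 'X_[m] = redm m.
Proof. by rewrite /red msuppX big_seq1 mcoeffX eqxx scale1r. Qed.

Lemma red_reduced f : reduced T f -> red f = f.
Proof.
move=> Tf; rewrite /red [RHS]mpolyE; apply: eq_big_seq => m /Tf small_m.
rewrite /redm mpolyXE_id; congr (_ *: _); apply: eq_bigr => i _.
rewrite Pdiv.Ring.rmodp_small ?polyInVarXn // size_polyXn.
by move: (small_m i); case: (size (T i)).
Qed.

(* [red] reduces each variable separately, and in [X_i] it meets
   [X^(m i) * T i mod T i = 0]. *)
Lemma red_XpolyInVar m i : red ('X_[m] * polyInVar i (T i)) = 0.
Proof.
pose C := \prod_(l < n | l != i) polyInVar l (Pdiv.Ring.rmodp 'X^(m l) (T l)).
have redXU j : red 'X_[(m + U_(i) *+ j)%MM] =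
    polyInVar i (Pdiv.Ring.rmodp 'X^(m i + j) (T i)) * C.
  rewrite redX /redm (bigD1 i) //= mnmDE mulmnE mnm1E eqxx mul1n; congr (_ * _).
  apply: eq_bigr => l /negbTE neq_li.
  by rewrite mnmDE mulmnE mnm1E eq_sym neq_li mul0n addn0.
have -> : 'X_[m] * polyInVar i (T i) =
    \sum_(j < size (T i)) (T i)`_j *: 'X_[(m + U_(i) *+ j)%MM].
  rewrite /polyInVar mulr_sumr; apply: eq_bigr => j _.
  by rewrite mulrCA mul_mpolyC mpolyXn -mpolyXD.
rewrite linear_sum /=.
under eq_bigr do rewrite linearZ /= redXU scalerAl -polyInVarZ.
rewrite -mulr_suml -polyInVar_sum.
under eq_bigr do rewrite -(Pdiv.RingMonic.rmodpZ (monicT i)).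
rewrite -Pdiv.RingMonic.rmodp_sum //.
have -> : \sum_(j < size (T i)) (T i)`_j *: 'X^(m i + j) = 'X^(m i) * T i.
  rewrite -[in RHS](coefK (T i)) poly_def mulr_sumr; apply: eq_bigr => j _.
  by rewrite -scalerAr exprD.
rewrite Pdiv.RingMonic.rmodp_mull // polyInVar_horner rmorph0 horner0.
by rewrite mul0r.
Qed.

Lemma red_inI h : inI T h -> red h = 0.
Proof.
move=> [hI ->]; rewrite linear_sum big1 // => i _.
rewrite [hI i]mpolyE mulr_suml linear_sum big1 // => m _.
by rewrite -scalerAl linearZ /= red_XpolyInVar scaler0.
Qed.

Lemma reduced_inI_eq0 h : reduced T h -> inI T h -> h = 0.
Proof. by move=> Th Ih; rewrite -(red_reduced Th) red_inI. Qed.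

Lemma red_rep f : reduced T (red f) /\ inI T (f - red f).
Proof.
have [g [Tg Ifg]] := reducible_all monicT f.
suff -> : red f = g by [].
by rewrite -[f](subrK g) linearD /= red_inI // red_reduced // add0r.
Qed.

End ReductionMap.

Lemma princP (R : finComNzRingType) (x y : R) :
  reflect (exists z, y = x * z) (y \in princ_ideal x).
Proof. by rewrite inE; apply: (iffP existsP) => -[z /eqP]; exists z => //; apply/eqP. Qed.

Lemma princ_ideal_is_ideal (R : finComNzRingType) (x : R) : is_ideal (princ_ideal x).
Proof.
split=> [|y z /princP[y' ->] /princP[z' ->]|c y /princP[y' ->]]; apply/princP.
- by exists 0; rewrite mulr0.
- by exists (y' + z'); rewrite mulrDr.
- by exists (c * y'); rewrite mulrCA.
Qed.

Section ChainRing.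
Variables (R : finComNzRingType) (a : R) (t : nat).
Hypothesis chainR : chain_ring R.
Hypothesis max_a : maximal_ideal (princ_ideal a).
Hypothesis nilp_a : a ^+ t = 0 /\ a ^+ t.-1 != 0.

Lemma notin_princ_invertible x : x \notin princ_ideal a -> exists y, x * y = 1.
Proof.
move=> x_a; have x_x : x \in princ_ideal x by apply/princP; exists 1; rewrite mulr1.
have [Ia _ maxI] := max_a.
have [/subsetP/(_ x x_x)|] := chainR (princ_ideal_is_ideal x) Ia.
  by rewrite (negbTE x_a).
move=> /(maxI _ (princ_ideal_is_ideal x)) [xRa | xR]; first by rewrite -xRa x_x in x_a.
have /princP[y /esym xy] : (1 : R) \in princ_ideal x by rewrite xR inE.
by exists y.
Qed.

Lemma nilp_index_gt0 : (0 < t)%N.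
Proof. by move: nilp_a; case: t => // -[/eqP]; rewrite expr0 oner_eq0. Qed.

Lemma socle_mul_eq0 x : (a ^+ t.-1 * x == 0) = (x \in princ_ideal a).
Proof.
apply/idP/idP => [|/princP[y ->]]; last first.
  by rewrite mulrA -exprSr prednK ?nilp_index_gt0 // nilp_a.1 mul0r.
apply: contraLR => /notin_princ_invertible[y xy]; apply: contraNN nilp_a.2.
by move/eqP=> socle_x; rewrite -[a ^+ _]mulr1 -xy mulrA socle_x mul0r.
Qed.

Lemma ann_a_socle c : a * c = 0 -> c \in princ_ideal (a ^+ t.-1).
Proof.
move=> ac0; suff : forall i, (i <= t.-1)%N -> c \in princ_ideal (a ^+ i) by apply.
elim=> [|i IH] lt_it; first by apply/princP; exists c; rewrite mul1r.
have /princP[y cy] := IH (ltnW lt_it).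
have [/princP[z yz]|y_a] := boolP (y \in princ_ideal a).
  by apply/princP; exists z; rewrite cy yz mulrA -exprSr.
have [z yz] := notin_princ_invertible y_a.
have aS0 : a ^+ i.+1 = 0 by rewrite -[LHS]mulr1 -yz mulrA exprS -(mulrA a) -cy ac0 mul0r.
by case/negP: nilp_a.2; rewrite -(subnK lt_it) exprD aS0 mulr0.
Qed.

End ChainRing.

Lemma mpoly_coef_choice (S R : nzRingType) (n : nat) (P : S -> R -> bool)
    (q : {mpoly S[n]}) :
  P 0 0 -> (forall m, exists x, P q@_m x) ->
  exists p : {mpoly R[n]}, forall m, P q@_m p@_m.
Proof.
move=> P00 exP; exists (\sum_(m <- msupp q) xchoose (exP m) *: 'X_[m]) => k.
rewrite raddf_sum /=; have [k_q | k_q] := boolP (k \in msupp q).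
  rewrite (bigD1_seq k) ?msupp_uniq //= mcoeffZ mcoeffX eqxx mulr1 big1 ?addr0.
    exact: xchooseP.
  by move=> m /negbTE neq_mk; rewrite mcoeffZ mcoeffX neq_mk mulr0.
rewrite (memN_msupp_eq0 k_q) big1_seq // => m /andP[_ m_q]; rewrite mcoeffZ mcoeffX.
by case: eqP => [eq_mk | _]; [rewrite -eq_mk m_q in k_q | rewrite mulr0].
Qed.

Section HenselCode.
Variables (R : comNzRingType) (n : nat) (T : 'I_n -> {poly R}).
Variables (a : R) (t : nat) (G : nat -> {mpoly R[n]}).
Hypothesis t_gt0 : (0 < t)%N.
Hypothesis hensG : hensel_family T t G.
Implicit Types (f h v : {mpoly R[n]}).

Local Notation K := (codeK T a t G).

Lemma codeK_hensel f : K f <-> exists c, inI T (f - c * G 1).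
Proof.
pose k0 := Ordinal t_gt0.
split=> [[c [h [-> Ih]]] | [c Ic]].
  exists (c k0); rewrite (bigD1 k0) //= expr0 scale1r addrAC [c k0 * G 1 + _]addrC addrK.
  apply: inID => //; apply: inI_sum => -[[|k] lt_kt] // _; apply/inIMl/inIZ.
  by apply: hensG.2; rewrite ltnS lt_kt.
exists (fun k => if k == k0 then c else 0), (f - c * G 1); split=> //.
rewrite (bigD1 k0) //= expr0 scale1r big1 ?addr0 ?subrKC // => k /negbTE ->.
exact: mul0r.
Qed.

Lemma codeK_ann v f : inI T (v * G 1) -> K f -> inI T (f * v).
Proof.
move=> Iv /codeK_hensel[c Ic]; rewrite -[f](subrK (c * G 1)) mulrDl.
apply: inID; first exact: inIMr.
by rewrite -mulrA [G 1 * v]mulrC; apply: inIMl.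
Qed.

Lemma codeKZ c f : K f -> K (c *: f).
Proof.
move=> /codeK_hensel[d Id]; apply/codeK_hensel.
by exists (c *: d); rewrite -scalerAl -scalerBr; apply: inIZ.
Qed.

Lemma codeK_addI f h : K f -> inI T h -> K (f + h).
Proof.
move=> /codeK_hensel[d Id] Ih; apply/codeK_hensel.
by exists d; rewrite addrAC; apply: inID.
Qed.

Hypothesis admG : admissible T t G.

Lemma hensel_ann f : inI T (f * G 0) -> inI T (f * G 1) -> inI T f.
Proof.
move=> I0 I1; apply: admG.1 => -[|[|i]] le_it //.
by apply/inIMl/hensG.2.
Qed.

Lemma hensel_ann_pow k f : inI T (f * G 0) -> inI T (G 1 ^+ k * f) -> inI T f.
Proof.
move=> I0; elim: k => [|k IH]; first by rewrite expr0 mul1r.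
move=> Ik; apply: IH; apply: hensel_ann; first by rewrite -mulrA; apply: inIMl.
by rewrite mulrAC -exprSr.
Qed.

End HenselCode.


Section FiniteQuotient.
Variables (R : finComNzRingType) (n : nat) (T : 'I_n -> {poly R}).
Hypothesis monicT : forall i, T i \is monic.
Implicit Types (f g : {mpoly R[n]}).

Definition reduced_bound := (\sum_k size (T k)).+1.

Lemma reduced_mdeg_lt f m : reduced T f -> m \in msupp f -> (mdeg m < reduced_bound)%N.
Proof.
move=> Tf /Tf small_m; rewrite ltnS mdegE; apply: leq_sum => k _.
exact: leq_trans (ltnW (small_m k)) (leq_pred _).
Qed.

Definition reduced_coefs f : {ffun 'X_{1..n < reduced_bound} -> R} :=
  [ffun m => f@_(val m)].

Lemma reduced_coefs_inj f g :
  reduced T f -> reduced T g -> reduced_coefs f = reduced_coefs g -> f = g.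
Proof.
move=> Tf Tg /ffunP eq_fg; apply/mpolyP => m.
have [lt_mB | le_Bm] := ltnP (mdeg m) reduced_bound.
  by have := eq_fg (BMultinom lt_mB); rewrite !ffunE.
have coef0 h : reduced T h -> h@_m = 0.
  by move=> Th; apply/memN_msupp_eq0/negP => /(reduced_mdeg_lt Th); rewrite ltnNge le_Bm.
by rewrite !coef0.
Qed.

Lemma pow_periodic_mod (g : {mpoly R[n]}) :
  exists i j, (i < j)%N /\ inI T (g ^+ i - g ^+ j).
Proof.
pose N := #|{ffun 'X_{1..n < reduced_bound} -> R}|.+1.
pose coefs (i : 'I_N) := reduced_coefs (red T (g ^+ i)).
have [/injectiveP inj_coefs | /injectivePn[i [j neq_ij eq_ij]]] := boolP (injectiveb coefs).
  by have := leq_card coefs inj_coefs; rewrite card_ord ltnn.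
have Ieq (k l : 'I_N) : coefs k = coefs l -> inI T (g ^+ k - g ^+ l).
  have [Tk Ik] := red_rep monicT (g ^+ k); have [Tl Il] := red_rep monicT (g ^+ l).
  move=> /(reduced_coefs_inj Tk Tl) eq_kl.
  have -> : g ^+ k - g ^+ l = (g ^+ k - red T (g ^+ k)) - (g ^+ l - red T (g ^+ l)).
    by rewrite eq_kl opprB addrA subrK.
  exact: inIB.
have [lt_ij | lt_ji | eq_val_ij] := ltngtP i j.
- by exists i, j; split=> //; apply: Ieq.
- by exists j, i; split=> //; apply: Ieq.
- by rewrite (val_inj eq_val_ij) eqxx in neq_ij.
Qed.

End FiniteQuotient.

Section HenselDecomposition.
Variables (R : finComNzRingType) (n : nat) (T : 'I_n -> {poly R}).
Variables (t : nat) (G : nat -> {mpoly R[n]}).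
Hypothesis monicT : forall i, T i \is monic.
Hypothesis t_gt0 : (0 < t)%N.
Hypothesis hensG : hensel_family T t G.
Hypothesis admG : admissible T t G.
Implicit Types (u v z : {mpoly R[n]}).

(* If [G1^i = G1^j] in [A] with [i < j], then [u - u G1^(j-i)] is killed by [G0]
   and by [G1^i], hence vanishes in [A]. *)
Lemma ann_G0_sub_G1 u : inI T (u * G 0) -> exists z, inI T (u - z * G 1).
Proof.
move=> Iu0; have [i [j [lt_ij Iij]]] := pow_periodic_mod monicT (G 1).
exists (u * G 1 ^+ (j - i).-1).
rewrite -mulrA -exprSr prednK ?subn_gt0 //.
rewrite -[u in u - _]mulr1 -mulrBr; apply: (hensel_ann_pow hensG admG (k := i)).
  by rewrite mulrAC; apply: inIMr.
rewrite mulrCA mulrBr mulr1 -exprD subnKC ?(ltnW lt_ij) //.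
exact: inIMl.
Qed.

Lemma one_decomp_G1 : exists z v, inI T (v * G 1) /\ inI T (z * G 1 + v - 1).
Proof.
have [u [v [Iu Iv Iuv]]] :
    exists u v, [/\ inI T (u * G 0), inI T (v * G 1) & inI T (u + v - 1)].
  exact: admG.2.
have [z Iuz] := ann_G0_sub_G1 Iu; exists z, v; split=> //.
have -> : z * G 1 + v - 1 = (u + v - 1) - (u - z * G 1) by ring.
exact: inIB.
Qed.

End HenselDecomposition.

Section Residue.
Variables (R : finComNzRingType) (a : R) (t : nat).
Hypothesis chainR : chain_ring R.
Hypothesis max_a : maximal_ideal (princ_ideal a).
Hypothesis nilp_a : a ^+ t = 0 /\ a ^+ t.-1 != 0.
Variables (F : fieldType) (pi : {rmorphism R -> F}).
Hypothesis pi_surj : forall y : F, exists x : R, pi x = y.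
Hypothesis ker_pi : forall x : R, pi x = 0 <-> x \in princ_ideal a.
Variables (n : nat) (T : 'I_n -> {poly R}) (G : nat -> {mpoly R[n]}).
Hypothesis monicT : forall i, T i \is monic.
Implicit Types (f g h : {mpoly R[n]}).

Local Notation Tbar := (fun i => map_poly pi (T i)).
Local Notation K := (codeK T a t G).
Local Notation Kbar := (codeImage pi T K).

Let t_gt0 := nilp_index_gt0 nilp_a.

Lemma mcoeff_socle_eq0 g m :
  ((a ^+ t.-1 *: g)@_m == 0) = ((map_mpoly pi g)@_m == 0).
Proof.
by rewrite mcoeffZ mcoeff_map_mpoly socle_mul_eq0 //; apply/idP/eqP => /ker_pi.
Qed.

Lemma msupp_socle g m : (m \in msupp (a ^+ t.-1 *: g)) = (m \in msupp (map_mpoly pi g)).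
Proof. by rewrite !mcoeff_msupp mcoeff_socle_eq0. Qed.

Lemma socle_scale_eq0 g : (a ^+ t.-1 *: g == 0) = (map_mpoly pi g == 0).
Proof.
apply/eqP/eqP => eq0; apply/mpolyP => m; apply/eqP; rewrite mcoeff0.
  by rewrite -mcoeff_socle_eq0 eq0 mcoeff0.
by rewrite mcoeff_socle_eq0 eq0 mcoeff0.
Qed.

Lemma size_map_monic k : size (Tbar k) = size (T k).
Proof. by rewrite size_map_poly_id0 // (monicP (monicT k)) rmorph1 oner_neq0. Qed.

Lemma map_mpoly_polyInVar i : map_mpoly pi (polyInVar i (T i)) = polyInVar i (Tbar i).
Proof.
rewrite /polyInVar rmorph_sum /= size_map_monic; apply: eq_bigr => k _.
by rewrite rmorphM rmorphXn /= map_mpolyC map_mpolyX coef_map.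
Qed.

Lemma map_inI h : inI T h -> inI Tbar (map_mpoly pi h).
Proof.
move=> [hI ->]; exists (fun i => map_mpoly pi (hI i)); rewrite rmorph_sum.
by apply: eq_bigr => i _; rewrite rmorphM /= map_mpoly_polyInVar.
Qed.

Lemma map_mpoly_surj (q : {mpoly F[n]}) : exists p, map_mpoly pi p = q.
Proof.
have [p Pp] : exists p : {mpoly R[n]}, forall m, pi p@_m == q@_m.
  apply: (mpoly_coef_choice (P := fun y x => pi x == y)); first by rewrite rmorph0.
  by move=> m; have [x <-] := pi_surj (q@_m); exists x.
by exists p; apply/mpolyP => m; rewrite mcoeff_map_mpoly; apply/eqP/Pp.
Qed.

Lemma inI_lift hb : inI Tbar hb -> exists h, inI T h /\ map_mpoly pi h = hb.
Proof.
move=> [hI ->]; have /fin_all_exists[lift pi_lift] := fun i => map_mpoly_surj (hI i).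
exists (\sum_i lift i * polyInVar i (T i)); split; first by exists lift.
rewrite rmorph_sum; apply: eq_bigr => i _.
by rewrite rmorphM /= map_mpoly_polyInVar pi_lift.
Qed.

Hypothesis hensG : hensel_family T t G.
Hypothesis admG : admissible T t G.

(* For [->], write [1 = z G1 + v] with [v G1 = 0]: then [g - g z G1] is [g v] modulo
   [I], and [g v] is killed by [a^(t-1)], so its reduced representative lies in [aR[X]]. *)
Lemma socle_codeK_image g : K (a ^+ t.-1 *: g) <-> Kbar (map_mpoly pi g).
Proof.
split=> [Kg | [f [hb [Kf Ihb eq_g]]]].
  have [z [v [Iv Izv]]] := one_decomp_G1 monicT t_gt0 hensG admG.
  have [Ty Iy] := red_rep monicT (g * v); set y := red T (g * v) in Ty Iy.
  have pi_y : map_mpoly pi y = 0.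
    apply/eqP; rewrite -socle_scale_eq0; apply/eqP/(reduced_inI_eq0 monicT).
      exact: reducedZ.
    have -> : a ^+ t.-1 *: y = (a ^+ t.-1 *: g) * v - a ^+ t.-1 *: (g * v - y).
      by rewrite scalerBr scalerAl opprB addrC subrK.
    by apply: inIB; [apply: (codeK_ann t_gt0 hensG Iv Kg) | apply: inIZ].
  exists (g * z * G 1), (map_mpoly pi (g - g * z * G 1 - y)); split.
  - by apply/(codeK_hensel a t_gt0 hensG); exists (g * z); rewrite subrr; apply: inI0.
  - apply: map_inI.
    have -> : g - g * z * G 1 - y = (g * v - y) - g * (z * G 1 + v - 1) by ring.
    by apply: inIB => //; apply: inIMl.
  - by rewrite !rmorphB /= pi_y subr0 addrC subrK.
have [h [Ih pi_h]] := inI_lift Ihb.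
have : a ^+ t.-1 *: (g - f - h) == 0.
  by rewrite socle_scale_eq0 !rmorphB /= eq_g pi_h addrAC addrK subrr.
rewrite !scalerBr subr_eq0 subr_eq => /eqP ->; rewrite addrC.
apply: (codeK_addI t_gt0 hensG); first exact: (codeKZ t_gt0 hensG).
exact: inIZ.
Qed.

Lemma codeImage_reduced_lift gb : Kbar gb -> reduced Tbar gb -> gb != 0 ->
  exists f, [/\ K f, reduced T f, f != 0 & hweight f = hweight gb].
Proof.
have [g <-] := map_mpoly_surj gb; move=> Kg Tg nz_g.
exists (a ^+ t.-1 *: g); split.
- exact/socle_codeK_image.
- apply: reduced_subset Tg => [k | m]; first exact/esym/size_map_monic.
  by rewrite msupp_socle.
- by rewrite socle_scale_eq0.
- by apply/perm_size/uniq_perm=> [||m]; rewrite ?msupp_uniq ?msupp_socle.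
Qed.

Lemma exists_last_nonzero_scale f : f != 0 ->
  exists k, a ^+ k *: f != 0 /\ a ^+ k.+1 *: f = 0.
Proof.
move=> nz_f.
suff ex N : a ^+ N *: f = 0 -> exists k, a ^+ k *: f != 0 /\ a ^+ k.+1 *: f = 0.
  by apply: (ex t); rewrite nilp_a.1 scale0r.
elim: N => [|N IH]; first by rewrite expr0 scale1r => f0; rewrite f0 eqxx in nz_f.
by move=> aN0; have [/IH | nz_N] := eqVneq (a ^+ N *: f) 0; last exists N.
Qed.

Lemma codeK_reduced_image f : K f -> reduced T f -> f != 0 ->
  exists gb, [/\ Kbar gb, reduced Tbar gb, gb != 0 & (hweight gb <= hweight f)%N].
Proof.
move=> Kf Tf /exists_last_nonzero_scale[k [nz_k z_k]].
have [g Pg] : exists g : {mpoly R[n]}, forall m, (a ^+ k *: f)@_m == a ^+ t.-1 * g@_m.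
  apply: (mpoly_coef_choice (P := fun c y => c == a ^+ t.-1 * y)); first by rewrite mulr0.
  move=> m; have /princP[y ->] : (a ^+ k *: f)@_m \in princ_ideal (a ^+ t.-1).
    apply: (ann_a_socle chainR max_a nilp_a).
    by rewrite -mcoeffZ scalerA -exprS z_k mcoeff0.
  by exists y.
have eq_g : a ^+ k *: f = a ^+ t.-1 *: g.
  by apply/mpolyP => m; rewrite [in RHS]mcoeffZ; apply/eqP/Pg.
have supp_g : {subset msupp (map_mpoly pi g) <= msupp f}.
  by move=> m; rewrite -msupp_socle -eq_g => /msuppZ_le.
exists (map_mpoly pi g); split.
- by apply/socle_codeK_image; rewrite -eq_g; apply: (codeKZ t_gt0 hensG).
- by apply: reduced_subset Tf => // i; apply: size_map_monic.
- by rewrite -socle_scale_eq0 -eq_g.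
- by apply: uniq_leq_size; rewrite ?msupp_uniq.
Qed.

Lemma codeK_reduced_nonzero f : K f -> ~ inI T f ->
  exists f', [/\ K f', reduced T f' & f' != 0].
Proof.
move=> Kf nIf; have [Tf' If'] := red_rep monicT f; exists (red T f); split=> //.
  have -> : red T f = f + - (f - red T f) by rewrite opprB addrC subrK.
  by apply: (codeK_addI t_gt0 hensG) => //; apply: inIN.
by apply/eqP => f0; rewrite f0 subr0 in If'.
Qed.

End Residue.

Section MinDist.
Variables (n : nat).

Lemma exists_min_dist (S : nzRingType) (T : 'I_n -> {poly S}) (C : {mpoly S[n]} -> Prop) :
  (exists g, [/\ C g, reduced T g & g != 0]) -> exists d, is_min_dist T C d.
Proof.
move=> [g [Cg Tg nz_g]].
pose W w := exists g, [/\ C g, reduced T g, g != 0 & hweight g = w].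
have W_g : W (hweight g) by exists g.
have [d [[W_d min_d] _]] :=
  dec_inh_nat_subset_has_unique_least_element W (fun w => classic (W w)) (ex_intro W _ W_g).
exists d; split=> // f Cf Tf nz_f; apply/leP/min_d.
by exists f.
Qed.

Lemma min_dist_transfer (S1 S2 : nzRingType) (T1 : 'I_n -> {poly S1})
    (T2 : 'I_n -> {poly S2}) (C1 : {mpoly S1[n]} -> Prop) (C2 : {mpoly S2[n]} -> Prop) :
  (exists f, [/\ C1 f, reduced T1 f & f != 0]) ->
  (forall f, C1 f -> reduced T1 f -> f != 0 ->
     exists g, [/\ C2 g, reduced T2 g, g != 0 & (hweight g <= hweight f)%N]) ->
  (forall g, C2 g -> reduced T2 g -> g != 0 ->
     exists f, [/\ C1 f, reduced T1 f, f != 0 & hweight f = hweight g]) ->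
  exists d, is_min_dist T1 C1 d /\ is_min_dist T2 C2 d.
Proof.
move=> [f [C1f T1f nz_f]] down up.
have [d [[g [C2g T2g nz_g <-]] min_d]] : exists d, is_min_dist T2 C2 d.
  by have [g [C2g T2g nz_g _]] := down f C1f T1f nz_f; apply: exists_min_dist; exists g.
exists (hweight g); split; split=> //; last by exists g.
  by have [f' [C1f' T1f' nz_f' <-]] := up g C2g T2g nz_g; exists f'.
move=> f' C1f' T1f' nz_f'; have [g' [C2g' T2g' nz_g' le_g'f']] := down f' C1f' T1f' nz_f'.
exact: leq_trans (min_d g' C2g' T2g' nz_g') le_g'f'.
Qed.

End MinDist.

Theorem mainTheorem8
  (R : finComNzRingType) (a : R) (t : nat)
  (hchain : chain_ring R)
  (hmax : maximal_ideal (princ_ideal a))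
  (hnil : a ^+ t = 0 /\ a ^+ t.-1 != 0)
  (F : finFieldType) (pi : {rmorphism R -> F})
  (hpi_surj : forall y : F, exists x : R, pi x = y)
  (hpi_ker : forall x : R, pi x = 0 <-> x \in princ_ideal a)
  (r : nat) (T : 'I_r -> {poly R})
  (hmonic : forall i, T i \is monic)
  (hsqf : forall i, squarefree (map_poly pi (T i)))
  (G : nat -> {mpoly R[r]})
  (hadm : admissible T t G)
  (hhens : hensel_family T t G)
  (hK0 : exists f, codeK T a t G f /\ ~ inI T f) :
  exists d : nat,
    is_min_dist T (codeK T a t G) d /\
    is_min_dist (fun i => map_poly pi (T i)) (codeImage pi T (codeK T a t G)) d.
Proof.
apply: min_dist_transfer.
- have [f [Kf nIf]] := hK0.
  exact: (codeK_reduced_nonzero hnil hmonic hhens Kf nIf).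
- exact: (codeK_reduced_image hchain hmax hnil hpi_surj hpi_ker hmonic hhens hadm).
- exact: (codeImage_reduced_lift hchain hmax hnil hpi_surj hpi_ker hmonic hhens hadm).
Qed.
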